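(* Let $n,m\geq1$, let $a_1\geq\cdots\geq a_n$ and $b_1\geq\cdots\geq b_m$ be nonnegative integers, let $0\leq k\leq\nu\leq\min\{n,m\}$ be integers, and let $N=N(d_A,d_B,\nu,k)$. Then some $s$-$t$-cut of minimum capacity in $N$ is clean.
   Context: Network definition: for nonnegative integers $a_1\geq\cdots\geq a_n$, $b_1\geq\cdots\geq b_m$ and integers $0\leq k\leq\nu\leq\min\{n,m\}$, $N(d_A,d_B,\nu,k)=(D,c)$ where $D$ is the digraph with vertex set $\{s,t,v_1,\ldots,v_n,w_1,\ldots,w_m\}$ and arcs: $(s,v_i)$ for all $i\in[n]$; $(w_j,t)$ for all $j\in[m]$; and $(v_i,w_j)$ for all $(i,j)\in[n]\times[m]$ such that ($i\leq k$ or $j\leq \nu-k$) and $i+j\neq \nu+1$. The capacity $c$ is: $c((s,v_i))=a_i-1$ for $i\in[k]$ and $a_i$ for $i\in[n]\setminus[k]$; $c((w_j,t))=b_j-1$ for $j\in[\nu-k]$ and $b_j$ for $j\in[m]\setminus[\nu-k]$; and $c((v_i,w_j))=1$ for every arc $(v_i,w_j)$. Here $[k]$ denotes $\{1,\ldots,k\}$. An $s$-$t$-cut generated by a vertex set $X$ with $s\in X$, $t\notin X$ is the set of arcs from $X$ to its complement; its capacity is the sum of their capacities. Write $X=\{s\}\cup S_1\cup S_2\cup T_1\cup T_2$ with $S_1\subseteq\{v_1,\ldots,v_k\}$, $S_2\subseteq\{v_{k+1},\ldots,v_n\}$, $T_1\subseteq\{w_1,\ldots,w_{\nu-k}\}$,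 $T_2\subseteq\{w_{\nu-k+1},\ldots,w_m\}$. The cut is clean if: (1) if $v_i\in S_1$ and $v_j\in\{v_1,\ldots,v_k\}\setminus S_1$ then $a_i\geq a_j$; (2) if $w_i\in T_1$ and $w_j\in\{w_1,\ldots,w_{\nu-k}\}\setminus T_1$ then $b_i\leq b_j$; (3) if $v_i\in S_2$ and $v_j\in\{v_{k+1},\ldots,v_n\}\setminus S_2$ then $a_i\geq a_j$; (4) if $w_i\in T_2$ and $w_j\in\{w_{\nu-k+1},\ldots,w_m\}\setminus T_2$ then $b_i\leq b_j$; (5) if $v_i\in S_1$, $v_j\in\{v_1,\ldots,v_k\}\setminus S_1$ and $a_i=a_j$, then $i>j$; (6) if $v_i\in S_2$, $v_j\in\{v_{k+1},\ldots,v_n\}\setminus S_2$ and $a_i=a_j$, then $i>j$. *)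

From HB Require Import structures.
From mathcomp Require Import all_boot all_order all_algebra.
Set Implicit Arguments. Unset Strict Implicit. Unset Printing Implicit Defensive.
Import Order.TTheory GRing.Theory Num.Theory.

(* Vertices of the network N(d_A,d_B,nu,k):
   inl true = s, inl false = t, inr (inl i) = v_(i+1), inr (inr j) = w_(j+1).
   Indices are 0-based: ordinal i : 'I_n stands for the paper's index i+1. *)
Definition vert (n m : nat) : finType := (bool + ('I_n + 'I_m))%type.

Definition src {n m} : vert n m := inl true.
Definition tgt {n m} : vert n m := inl false.
Definition vv {n m} (i : 'I_n) : vert n m := inr (inl i).
Definition ww {n m} (j : 'I_m) : vert n m := inr (inr j).

(* Arc relation of D.  Paper: (v_i,w_j) is an arc iff (i <= k or j <= nu-k)
   and i + j <> nu + 1 (1-based); with 0-based i', j' this reads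
   (i' < k or j' < nu - k) and i' + j' + 1 <> nu. *)
Definition arc (n m nu k : nat) (u v : vert n m) : bool :=
  match u, v with
  | inl true, inr (inl _) => true
  | inr (inr _), inl false => true
  | inr (inl i), inr (inr j) => ((i < k) || (j < nu - k)) && (i + j + 1 != nu)
  | _, _ => false
  end.

(* Capacities (integers: a_i - 1 may be -1 when a_i = 0). *)
Definition cap (n m nu k : nat) (a : 'I_n -> nat) (b : 'I_m -> nat)
    (u v : vert n m) : int :=
  match u, v with
  | inl true, inr (inl i) => ((a i)%:Z - (i < k : nat)%:Z)%R
  | inr (inr j), inl false => ((b j)%:Z - (j < nu - k : nat)%:Z)%R
  | inr (inl _), inr (inr _) => 1%R
  | _, _ => 0%R
  end.

Definition cut_cap (n m nu k : nat) (a : 'I_n -> nat) (b : 'I_m -> nat)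
    (X : {set vert n m}) : int :=
  (\sum_(u in X) \sum_(v | (v \notin X) && arc nu k u v) cap nu k a b u v)%R.

Definition is_st_cut_set (n m : nat) (X : {set vert n m}) : Prop :=
  src \in X /\ tgt \notin X.

(* Conditions (1)-(6) of cleanness. S1 = X ∩ {v_1..v_k}, S2 = X ∩ {v_(k+1)..v_n},
   T1 = X ∩ {w_1..w_(nu-k)}, T2 = X ∩ {w_(nu-k+1)..w_m}. *)
Definition clean (n m nu k : nat) (a : 'I_n -> nat) (b : 'I_m -> nat)
    (X : {set vert n m}) : Prop :=
      (forall i j : 'I_n, i < k -> j < k -> vv i \in X -> vv j \notin X ->
         a j <= a i) /\
      (forall i j : 'I_m, i < nu - k -> j < nu - k -> ww i \in X -> ww j \notin X ->
         b i <= b j) /\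
      (forall i j : 'I_n, k <= i -> k <= j -> vv i \in X -> vv j \notin X ->
         a j <= a i) /\
      (forall i j : 'I_m, nu - k <= i -> nu - k <= j -> ww i \in X -> ww j \notin X ->
         b i <= b j) /\
      (forall i j : 'I_n, i < k -> j < k -> vv i \in X -> vv j \notin X ->
         a i = a j -> j < i)
    /\
      (forall i j : 'I_n, k <= i -> k <= j -> vv i \in X -> vv j \notin X ->
         a i = a j -> j < i).

From Pilot Require Import Defs.
From HB Require Import structures.
From mathcomp Require Import all_boot all_order all_algebra zify.
Import Order.TTheory GRing.Theory Num.Theory.
Set Implicit Arguments. Unset Strict Implicit.

(* A cut is given by S = X ∩ {v_i} and T = X ∩ {w_j}.  For fixed T its
   capacity is a sum of independent contributions of the v_i: c(s,v_i) if
   v_i ∉ S, and otherwise the number of arcs from v_i into W ∖ T.  That number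
   is r_i, the count of w_j ∉ T in the block of w's that v_i is joined to,
   minus at most one, because only the arc with i + j = ν + 1 is missing.
   Hence S = {i | r_i ≤ c(s,v_i)} is optimal for T, and symmetrically for the
   w_j once S is fixed.  Re-optimising S and then T starting from a minimum cut
   gives a minimum cut whose parts are strict thresholds of a (resp. b) inside
   each block of indices, since r_i only depends on the block of i; such a cut
   is clean. *)


Lemma card_antidiag_le1 (q i c : nat) :
  #|[predC [pred j : 'I_q | i + j + 1 != c]]| <= 1.
Proof.
apply/card_le1_eqP => j j'; rewrite !inE !negbK => /eqP eq_j /eqP eq_j'.
by apply: val_inj => /=; lia.
Qed.

Lemma card_predI_predC_le1 (T : finType) (A B : {pred T}) :
  #|[predC B]| <= 1 -> #|[predI A & B]| <= #|A| <= #|[predI A & B]|.+1.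
Proof.
move=> leCB; rewrite -(cardID B A) leq_addr /= -addn1 leq_add2l.
apply: leq_trans leCB; apply: subset_leq_card; apply/subsetP => x.
by rewrite !inE => /andP[].
Qed.

Local Open Scope ring_scope.

Lemma sum_if_in (V : nmodType) (I : finType) (A : {pred I}) (F G : I -> V) :
  \sum_i (if i \in A then F i else G i) = \sum_(i in A) F i + \sum_(i | i \notin A) G i.
Proof.
rewrite (bigID (mem A)) /=; congr (_ + _); apply: eq_bigr => i; first by move->.
by move/negbTE->.
Qed.

Section CutsOfN.

Variables (n m nu k : nat) (a : 'I_n -> nat) (b : 'I_m -> nat).

Definition cut_of (S : {set 'I_n}) (T : {set 'I_m}) : {set vert n m} :=
  [set x : vert n m | match x with
                      | inl c => c
                      | inr (inl i) => i \in S
                      | inr (inr j) => j \in T end].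

Lemma st_cut_of S T : is_st_cut_set (cut_of S T).
Proof. by split; rewrite inE. Qed.

Lemma cut_ofE (X : {set vert n m}) : is_st_cut_set X ->
  X = cut_of [set i | vv i \in X] [set j | ww j \in X].
Proof.
case=> Xs Xt; apply/setP => -[[]|[i|j]]; rewrite !inE //.
exact: negbTE.
Qed.

Definition src_cap (i : 'I_n) : int := cap nu k a b src (vv i).
Definition tgt_cap (j : 'I_m) : int := cap nu k a b (ww j) tgt.
Definition vw_arc (i : 'I_n) (j : 'I_m) : bool := Defs.arc nu k (vv i) (ww j).

Definition out_deg (T : {set 'I_m}) (i : 'I_n) : nat :=
  #|[pred j | (j \notin T) && vw_arc i j]|.
Definition in_deg (S : {set 'I_n}) (j : 'I_m) : nat :=
  #|[pred i | (i \in S) && vw_arc i j]|.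

Definition cut_value (S : {set 'I_n}) (T : {set 'I_m}) : int :=
  \sum_(i | i \notin S) src_cap i + \sum_(j in T) tgt_cap j
  + \sum_(i in S) (out_deg T i)%:R.

Lemma sum_vert (F : vert n m -> int) :
  \sum_v F v = F src + F tgt + \sum_i F (vv i) + \sum_j F (ww j).
Proof. by rewrite big_sumType big_bool big_sumType /= addrA. Qed.

Lemma out_cap_src S T :
  \sum_(v | (v \notin cut_of S T) && Defs.arc nu k src v) cap nu k a b src v
  = \sum_(i | i \notin S) src_cap i.
Proof.
rewrite big_mkcond sum_vert !inE /= add0r [in RHS]big_mkcond.
rewrite [X in _ + X]big1 ?addr0 => [|j _]; last by rewrite andbF.
by apply: eq_bigr => i _; rewrite !inE andbT.
Qed.

Lemma out_cap_vv S T i :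
  \sum_(v | (v \notin cut_of S T) && Defs.arc nu k (vv i) v) cap nu k a b (vv i) v
  = (out_deg T i)%:R.
Proof.
rewrite big_mkcond sum_vert !inE /= !add0r big1 ?add0r => [|i' _]; last by rewrite andbF.
under eq_bigr => j _ do rewrite inE.
by rewrite -big_mkcond sumr_const.
Qed.

Lemma out_cap_ww S T j :
  \sum_(v | (v \notin cut_of S T) && Defs.arc nu k (ww j) v) cap nu k a b (ww j) v
  = tgt_cap j.
Proof.
rewrite big_mkcond sum_vert !inE /= add0r !big1 ?addr0 // => x _; exact: if_same.
Qed.

Lemma cut_capE S T : cut_cap nu k a b (cut_of S T) = cut_value S T.
Proof.
rewrite /cut_cap big_mkcond sum_vert !inE /= out_cap_src addr0.
under eq_bigr => i _ do rewrite out_cap_vv inE.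
under [X in _ + X]eq_bigr => j _ do rewrite out_cap_ww inE.
by rewrite -!big_mkcond /cut_value addrAC.
Qed.

Definition out_range (T : {set 'I_m}) (i : 'I_n) : nat :=
  #|[pred j | (j \notin T) && ((i < k)%N || (j < nu - k)%N)]|.

Lemma out_deg_range T i : (out_deg T i <= out_range T i <= (out_deg T i).+1)%N.
Proof.
have <- : #|[predI [pred j | (j \notin T) && ((i < k)%N || (j < nu - k)%N)]
               & [pred j : 'I_m | (i + j + 1 != nu)%N]]| = out_deg T i.
  by apply: eq_card => j; rewrite !inE andbA.
exact: card_predI_predC_le1 (card_antidiag_le1 _ i nu).
Qed.

Definition in_range (S : {set 'I_n}) (j : 'I_m) : nat :=
  #|[pred i | (i \in S) && ((i < k)%N || (j < nu - k)%N)]|.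

Lemma in_deg_range S j : (in_deg S j <= in_range S j <= (in_deg S j).+1)%N.
Proof.
have <- : #|[predI [pred i | (i \in S) && ((i < k)%N || (j < nu - k)%N)]
               & [pred i : 'I_n | (j + i + 1 != nu)%N]]| = in_deg S j.
  by apply: eq_card => i; rewrite !inE andbA (addnC j).
exact: card_predI_predC_le1 (card_antidiag_le1 _ j nu).
Qed.

Lemma sum_out_deg (S : {set 'I_n}) (T : {set 'I_m}) :
  \sum_(i in S) (out_deg T i)%:R = \sum_(j | j \notin T) (in_deg S j)%:R :> int.
Proof.
rewrite -!natr_sum; congr _%:R; rewrite /out_deg /in_deg.
under eq_bigr do rewrite -sum1_card.
rewrite (exchange_big_dep (fun j => j \notin T)) => [|i j _ /andP[]//].
apply: eq_bigr => j notTj; rewrite -sum1_card.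
by apply: eq_bigl => i; rewrite !inE notTj.
Qed.

Lemma cut_value_rows S T : cut_value S T =
  \sum_i (if i \in S then (out_deg T i)%:R else src_cap i) + \sum_(j in T) tgt_cap j.
Proof. by rewrite /cut_value sum_if_in addrAC [X in X + _]addrC. Qed.

Lemma cut_value_cols S T : cut_value S T =
  \sum_(i | i \notin S) src_cap i + \sum_j (if j \in T then tgt_cap j else (in_deg S j)%:R).
Proof. by rewrite /cut_value sum_out_deg sum_if_in addrA. Qed.

Definition best_S (T : {set 'I_m}) : {set 'I_n} :=
  [set i | (out_range T i)%:R <= src_cap i].
Definition best_T (S : {set 'I_n}) : {set 'I_m} :=
  [set j | tgt_cap j < (in_range S j)%:R].

Lemma cut_value_best_S S T : cut_value (best_S T) T <= cut_value S T.
Proof.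
rewrite !cut_value_rows lerD2r; apply: ler_sum => i _.
have /andP[le_deg le_range] := out_deg_range T i.
by rewrite inE; do 2 case: ifP => //; lia.
Qed.

Lemma cut_value_best_T S T : cut_value S (best_T S) <= cut_value S T.
Proof.
rewrite !cut_value_cols lerD2l; apply: ler_sum => j _.
have /andP[le_deg le_range] := in_deg_range S j.
by rewrite inE; do 2 case: ifP => //; lia.
Qed.

Lemma best_S_threshold T (i i' : 'I_n) : (i < k)%N = (i' < k)%N ->
  i \in best_S T -> i' \notin best_S T -> (a i' < a i)%N.
Proof.
move=> same_block; rewrite !inE -ltNge.
have <- : out_range T i = out_range T i'.
  by apply: eq_card => j; rewrite !inE same_block.
rewrite /src_cap /= -same_block; lia.
Qed.

Lemma best_T_threshold S (j j' : 'I_m) : (j < nu - k)%N = (j' < nu - k)%N ->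
  j \in best_T S -> j' \notin best_T S -> (b j < b j')%N.
Proof.
move=> same_block; rewrite !inE -leNgt.
have <- : in_range S j = in_range S j'.
  by apply: eq_card => i; rewrite !inE same_block.
rewrite /tgt_cap /= -same_block; lia.
Qed.

Lemma mem_cut_of_vv S T i : (vv i \in cut_of S T) = (i \in S).
Proof. by rewrite inE. Qed.

Lemma mem_cut_of_ww S T j : (ww j \in cut_of S T) = (j \in T).
Proof. by rewrite inE. Qed.

Lemma clean_best S T : clean nu k a b (cut_of (best_S T) (best_T S)).
Proof.
have sepS (i j : 'I_n) : (i < k)%N = (j < k)%N ->
    vv i \in cut_of (best_S T) (best_T S) -> vv j \notin cut_of (best_S T) (best_T S) ->
    (a j < a i)%N.
  by rewrite !mem_cut_of_vv; exact: best_S_threshold.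
have sepT (i j : 'I_m) : (i < nu - k)%N = (j < nu - k)%N ->
    ww i \in cut_of (best_S T) (best_T S) -> ww j \notin cut_of (best_S T) (best_T S) ->
    (b i < b j)%N.
  by rewrite !mem_cut_of_ww; exact: best_T_threshold.
split; [|split; [|split; [|split; [|split]]]] => i j lt_i lt_j Xi Xj.
- by rewrite ltnW // sepS ?lt_i ?lt_j.
- by rewrite ltnW // sepT ?lt_i ?lt_j.
- by rewrite ltnW // sepS // !ltnNge lt_i lt_j.
- by rewrite ltnW // sepT // !ltnNge lt_i lt_j.
- by move=> eq_a; have := sepS i j; rewrite eq_a ltnn lt_i lt_j => /(_ erefl Xi Xj).
- by move=> eq_a; have := sepS i j; rewrite eq_a ltnn !ltnNge lt_i lt_j => /(_ erefl Xi Xj).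
Qed.

Lemma exists_min_st_cut : exists2 X : {set vert n m}, is_st_cut_set X &
  forall Y, is_st_cut_set Y -> cut_cap nu k a b X <= cut_cap nu k a b Y.
Proof.
pose P (X : {set vert n m}) := (src \in X) && (tgt \notin X).
have P0 : P (cut_of set0 set0) by apply/andP; apply: st_cut_of.
have [X /andP[sX tX] minX] :=
  @real_arg_minP _ _ _ _ (cut_cap nu k a b) P0 (fun X _ => num_real _).
by exists X => // Y [sY tY]; apply: minX; apply/andP.
Qed.

End CutsOfN.

Local Close Scope ring_scope.

Theorem lemma3 (n m : nat) (a : 'I_n -> nat) (b : 'I_m -> nat) (nu k : nat) :
  0 < n -> 0 < m ->
  (forall i j : 'I_n, i <= j -> a j <= a i) ->
  (forall i j : 'I_m, i <= j -> b j <= b i) ->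
  k <= nu -> nu <= minn n m ->
  exists X : {set vert n m},
    [/\ is_st_cut_set X,
        (forall Y : {set vert n m}, is_st_cut_set Y ->
           (cut_cap nu k a b X <= cut_cap nu k a b Y)%R)
      & clean nu k a b X].
Proof.
move=> _ _ _ _ _ _.
have [X0 stX0 minX0] := exists_min_st_cut nu k a b.
pose T0 := [set j | ww j \in X0].
pose S1 := best_S nu k a b T0.
exists (cut_of S1 (best_T nu k a b S1)); split.
- exact: st_cut_of.
- move=> Y stY; apply: le_trans (minX0 Y stY).
  rewrite [X in (_ <= cut_cap _ _ _ _ X)%R](cut_ofE stX0) !cut_capE.
  exact: le_trans (cut_value_best_T _ _ _ _ _ _) (cut_value_best_S _ _ _ _ _ _).
- exact: clean_best.
Qed.
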